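(* Let $q\in\mathscr{P}_2(\mathbb{R}^d)$ not give mass to small sets, and let $\psi:\mathbb{R}^d\to(-\infty,+\infty]$ be a proper, lower semicontinuous convex function. Define $\varphi^\psi(x)\coloneqq\inf_{p\in\mathscr{P}_2^x(\mathbb{R}^d)}\big(\int\psi\,dp-\mathrm{MCov}(p,q)\big)$ for $x\in\mathbb{R}^d$. Then: (i) the function $x\mapsto\varphi^\psi(x)$ is convex on $\operatorname{dom}\psi$; (ii) if $\varphi^\psi(x)>-\infty$ for some $x\in\operatorname{int}(\operatorname{dom}\psi)$, then $\varphi^\psi>-\infty$ on $\operatorname{int}(\operatorname{dom}\psi)$.
   Context: $\mathscr{P}_2(\mathbb{R}^d)$: Borel probability measures with finite second moment; $\mathscr{P}_2^x(\mathbb{R}^d)$: those with barycenter $\int y\,p(dy)=x$. $q$ does not give mass to small sets: $q(A)=0$ for measurable $A$ of Hausdorff dimension $\le d-1$. $\mathrm{MCov}(p,q)\coloneqq\sup_{\tilde\pi\in\mathsf{Cpl}(p,q)}\int\langle y,z\rangle\,d\tilde\pi$ over couplings. $\operatorname{dom}\psi=\{\psi<+\infty\}$; proper means $\operatorname{dom}\psi\neq\varnothing$. *)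

From mathcomp Require Import all_boot all_order all_algebra.
From mathcomp Require Import all_classical all_reals all_analysis.
Set Implicit Arguments. Unset Strict Implicit. Unset Printing Implicit Defensive.
Import Order.TTheory GRing.Theory Num.Theory numFieldNormedType.Exports.
Local Open Scope classical_set_scope.
Local Open Scope ring_scope.

Section Defs.
Variables (R : realType) (d : nat).

(** R^d is modelled by row vectors 'rV[R]_d (with the library topology). *)
Definition dotv (y z : 'rV[R]_d) : R := \sum_(i < d) y ord0 i * z ord0 i.
Definition edist (x y : 'rV[R]_d) : R := Num.sqrt (dotv (x - y) (x - y)).

Definition Rd := g_sigma_algebraType (@open ('rV[R]_d : topologicalType)).

Local Open Scope ereal_scope.

Definition P2 (p : probability Rd R) : Prop :=
  \int[p]_y (dotv y y)%:E < +oo.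

Definition P2x (x : 'rV[R]_d) : set (probability Rd R) :=
  [set p | P2 p /\ forall i : 'I_d, \int[p]_y (y ord0 i)%:E = (x ord0 i)%:E].

Definition Cpl (p q : probability Rd R) : set (probability (Rd * Rd)%type R) :=
  [set pi | (forall A : set Rd, measurable A -> pi (A `*` setT) = p A) /\
            (forall B : set Rd, measurable B -> pi (setT `*` B) = q B)].

Definition MCov (p q : probability Rd R) : \bar R :=
  ereal_sup [set \int[pi]_yz (dotv yz.1 yz.2)%:E | pi in Cpl p q].

Definition ediam (A : set 'rV[R]_d) : \bar R :=
  ereal_sup [set (edist xy.1 xy.2)%:E | xy in A `*` A].

Definition hpow (s : R) (U : set 'rV[R]_d) : \bar R :=
  if asbool (U = set0) then 0 else ((fine (ediam U)) `^ s)%:E.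

Definition hausdorff_content (s delta : R) (A : set 'rV[R]_d) : \bar R :=
  ereal_inf [set \sum_(0 <= n <oo) hpow s (C n) | C in
    [set C : nat -> set 'rV[R]_d |
       A `<=` \bigcup_n C n /\ forall n, ediam (C n) <= delta%:E]].

Definition hausdorff_measure (s : R) (A : set 'rV[R]_d) : \bar R :=
  ereal_sup [set hausdorff_content s delta A | delta in [set delta : R | (0 < delta)%R]].

Definition hausdorff_dim (A : set 'rV[R]_d) : \bar R :=
  ereal_inf [set s%:E | s in [set s : R | (0 <= s)%R /\ hausdorff_measure s A = 0]].

Definition no_mass_small_sets (q : probability Rd R) : Prop :=
  forall A : set Rd, measurable A ->
    hausdorff_dim A <= ((d%:R - 1)%R)%:E -> q A = 0.

Definition econvex (f : 'rV[R]_d -> \bar R) : Prop :=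
  forall (x y : 'rV[R]_d) (t : R), (0 < t < 1)%R ->
    f (t *: x + (1 - t) *: y)%R <= t%:E * f x + (1 - t)%R%:E * f y.

Definition edom (f : 'rV[R]_d -> \bar R) : set 'rV[R]_d := [set x | f x < +oo].

Definition phi_psi (psi : 'rV[R]_d -> \bar R) (q : probability Rd R)
    (x : 'rV[R]_d) : \bar R :=
  ereal_inf [set \int[p]_y psi y - MCov p q | p in P2x x].

End Defs.

From HB Require Import structures.
From mathcomp Require Import all_boot all_order all_algebra.
From mathcomp Require Import all_classical all_reals all_analysis.
From mathcomp Require Import measurable_realfun ring lra.
Set Implicit Arguments. Unset Strict Implicit. Unset Printing Implicit Defensive.
Import Order.TTheory GRing.Theory Num.Theory numFieldNormedType.Exports.
Local Open Scope classical_set_scope.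
Local Open Scope ring_scope.
Local Open Scope ereal_scope.

(* Mixing makes the objective [p |-> \int psi dp - MCov(p, q)] convex: if p and
   p' have barycenters x and y, then t p + (1 - t) p' has barycenter
   t x + (1 - t) y, the integral of psi is affine in the measure, and mixing a
   coupling of (p, q) with one of (p', q) couples the mixture with q, so
   MCov(., q) is concave.  Taking infima gives (i); on dom psi these infima are
   not +oo because the Dirac mass at x has objective psi(x) - MCov(delta_x, q),
   and MCov(delta_x, q) > -oo as q has a finite second moment.  For (ii), a
   convex function equal to -oo at a point x of a convex set D is -oo at every
   interior point x0 of D, since x0 is a proper convex combination of x and a
   point of D beyond x0 on the ray from x. *)

Section extended_real_arithmetic.
Variable R : realType.
Implicit Types (x y m n u c : \bar R) (S : set (\bar R)).

Lemma ge0_EFin_muleDr (r : R) x y : (0 <= r)%R ->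
  r%:E * (x + y) = r%:E * x + r%:E * y.
Proof.
rewrite le_eqVlt => /predU1P[<-|r0]; first by rewrite !mul0e adde0.
have [xy|] := boolP (x +? y); first by rewrite muleDr.
by case: x => [a||]; case: y => [b||] //= _;
  rewrite ?addeNy ?addNye gt0_muleNy ?gt0_muley ?lte_fin // ?addeNy ?addNye.
Qed.

Lemma gt0_EFin_mule_lty (r : R) x : (0 < r)%R -> (r%:E * x < +oo) = (x < +oo).
Proof.
move=> r0; case: x => [a||] //=.
- by rewrite -EFinM !ltry.
- by rewrite gt0_muley ?lte_fin // ltxx.
- by rewrite gt0_muleNy ?lte_fin // ltNye.
Qed.

Lemma ge0_EFin_combB (t s : R) x y m n : (0 <= t)%R -> (0 <= s)%R ->
  0 <= m -> 0 <= n ->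
  (t%:E * x + s%:E * y) - (t%:E * m + s%:E * n) =
  t%:E * (x - m) + s%:E * (y - n).
Proof.
move=> t0 s0 m0 n0.
rewrite oppeD ?ge0_adde_def ?inE ?mule_ge0 ?lee_fin // addeACA.
by rewrite !ge0_EFin_muleDr // !muleN.
Qed.

Lemma subeDD_le x y m n : x - m < +oo -> y - n < +oo ->
  (x + y) - (m + n) <= (x - m) + (y - n).
Proof.
move=> xm yn; have [mn|] := boolP (m +? n); first by rewrite oppeD // addeACA.
case: m xm => [a||]; case: n yn => [b||] //= yn xm _.
- by case: y yn => [y||] //= _; rewrite !addeNy leNye.
- by case: x xm => [x||] //= _; rewrite addNye !addeNy ?addNye leNye.
Qed.

Lemma gt0_EFin_combB_le (t s : R) x y m n : (0 < t)%R -> (0 < s)%R ->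
  x - m < +oo -> y - n < +oo ->
  (t%:E * x + s%:E * y) - (t%:E * m + s%:E * n) <=
  t%:E * (x - m) + s%:E * (y - n).
Proof.
move=> t0 s0 xm yn; have t0' := ltW t0; have s0' := ltW s0.
rewrite !ge0_EFin_muleDr // !muleN.
by apply: subeDD_le; rewrite -muleN -ge0_EFin_muleDr // gt0_EFin_mule_lty.
Qed.

Lemma adde_ereal_sup_le u S c : (forall a, S a -> u + a <= c) ->
  u + ereal_sup S <= c.
Proof.
case: u => [r||] uS; last by rewrite addNye leNye.
- by rewrite -leeBrDl //; apply/ereal_supP => a Sa; rewrite leeBrDl // uS.
- have [->|supNy] := eqVneq (ereal_sup S) -oo; first by rewrite addeNy leNye.
  move: (supNy); rewrite -ltNye => /ereal_sup_gt[a Sa aNy].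
  by move: (uS a Sa); rewrite !addye // gt_eqF.
Qed.

Lemma adde_ereal_inf_ge u S c : u < +oo -> (exists2 a, S a & a < +oo) ->
  (forall a, S a -> a < +oo -> c <= u + a) -> c <= u + ereal_inf S.
Proof.
case: u => [r||] // _ [a0 Sa0 a0y] uS; last first.
  by apply: le_trans (uS a0 Sa0 a0y) _; rewrite addNye.
rewrite -leeBlDl //; apply/ereal_infP => a Sa.
have [->|ay] := eqVneq a +oo; first exact: leey.
by rewrite leeBlDl // uS // ltey.
Qed.

Lemma ereal_sup_comb_le (t s : R) S (S' : set (\bar R)) c :
  (0 < t)%R -> (0 < s)%R ->
  (forall a b, S a -> S' b -> t%:E * a + s%:E * b <= c) ->
  t%:E * ereal_sup S + s%:E * ereal_sup S' <= c.
Proof.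
move=> t0 s0 SS'c; rewrite -!ereal_sup_pZl //.
apply: adde_ereal_sup_le => _ [a Sa <-]; rewrite addeC.
by apply: adde_ereal_sup_le => _ [b S'b <-]; rewrite addeC SS'c.
Qed.

Lemma ereal_inf_comb_ge (t s : R) S (S' : set (\bar R)) c :
  (0 < t)%R -> (0 < s)%R ->
  (exists2 a, S a & a < +oo) -> (exists2 b, S' b & b < +oo) ->
  (forall a b, S a -> S' b -> a < +oo -> b < +oo -> c <= t%:E * a + s%:E * b) ->
  c <= t%:E * ereal_inf S + s%:E * ereal_inf S'.
Proof.
move=> t0 s0 [a0 Sa0 a0y] [b0 S'b0 b0y] SS'c; rewrite -!ereal_inf_pZl //.
apply: adde_ereal_inf_ge.
- apply: (@le_lt_trans _ _ (t%:E * a0)); last by rewrite gt0_EFin_mule_lty.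
  by apply: ereal_inf_lbound; exists a0.
- by exists (s%:E * b0); [exists b0 | rewrite gt0_EFin_mule_lty].
move=> _ [b S'b <-]; rewrite gt0_EFin_mule_lty // => b_fin; rewrite addeC.
apply: adde_ereal_inf_ge; first by rewrite gt0_EFin_mule_lty.
  by exists (t%:E * a0); [exists a0 | rewrite gt0_EFin_mule_lty].
by move=> _ [a Sa <-]; rewrite gt0_EFin_mule_lty // addeC => a_fin; apply: SS'c.
Qed.

End extended_real_arithmetic.

Section extended_convexity.
Variable R : realType.

Definition econvex_on (V : lmodType R) (D : set V) (f : V -> \bar R) :=
  forall x y (t : R), D x -> D y -> (0 < t < 1)%R ->
    f (t *: x + (1 - t) *: y)%R <= t%:E * f x + (1 - t)%:E * f y.

Lemma convex_comb_ray (V : lmodType R) (x x0 : V) (del : R) : (0 < del)%R ->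
  x0 = (del / (1 + del) *: x +
        (1 - del / (1 + del)) *: (x0 + del *: (x0 - x)))%R.
Proof.
move=> del0; have tdel : ((1 - del / (1 + del)) * del = del / (1 + del))%R.
  by field; lra.
by rewrite scalerDr scalerA tdel scalerBr addrCA [X in (_ + X)%R]addrC subrK
  -scalerDl subrK scale1r.
Qed.

Lemma econvex_on_interior_gtNy (V : normedModType R) (D : set V)
    (f : V -> \bar R) x0 x :
  econvex_on D f -> D° x0 -> -oo < f x0 -> D x -> -oo < f x.
Proof.
move=> cvx /nbhs_ballP[e e0 De] fx0 Dx; rewrite ltNye; apply/eqP => fxNy.
pose v := (x0 - x)%R; pose del := (e / (2 * (`|v| + 1)))%R.
have nv := normr_ge0 v.
have del0 : (0 < del)%R by rewrite divr_gt0 // mulr_gt0 //; lra.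
pose y := (x0 + del *: v)%R.
have Dy : D y.
  apply: De; rewrite -ball_normE /ball_ /= opprD addrA subrr add0r normrN.
  rewrite normrZ gtr0_norm // /del mulrAC -mulrA gtr_pMr //.
  by rewrite ltr_pdivrMr ?mul1r; lra.
pose t := (del / (1 + del))%R.
have t01 : (0 < t < 1)%R.
  apply/andP; split; first by rewrite divr_gt0 //; lra.
  by rewrite ltr_pdivrMr ?mul1r; lra.
have := cvx _ _ _ Dx Dy t01.
rewrite -convex_comb_ray // fxNy gt0_muleNy ?lte_fin; last by case/andP: t01.
by rewrite addNye leeNy_eq => /eqP fx0Ny; rewrite fx0Ny ltxx in fx0.
Qed.

End extended_convexity.

Section mixture.
Context d (X : measurableType d) (R : realType).
Variables (t s : {nonneg R}) (p p' : probability X R).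

(* The proof of [t + s = 1] is an argument so that the probability instance
   below can be declared on [mixture ts1]. *)
Definition mixture (ts1 : (t%:num + s%:num = 1)%R) : set X -> \bar R :=
  measure_add (mscale t p) (mscale s p').

Hypothesis ts1 : (t%:num + s%:num = 1)%R.

HB.instance Definition _ := Measure.on (mixture ts1).

Let mixture_setT : mixture ts1 setT = 1.
Proof.
rewrite /mixture measure_addE.
by change (t%:num%:E * p setT + s%:num%:E * p' setT = 1);
  rewrite !probability_setT !mule1 -EFinD ts1.
Qed.

HB.instance Definition _ :=
  Measure_isProbability.Build _ _ _ (mixture ts1) mixture_setT.

Lemma mixtureE A :
  (mixture ts1 : probability X R) A = t%:num%:E * p A + s%:num%:E * p' A.
Proof. exact: measure_addE. Qed.

Lemma integral_mixture (f : X -> \bar R) : measurable_fun setT f ->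
  \int[mixture ts1]_x f x =
  t%:num%:E * \int[p]_x f x + s%:num%:E * \int[p']_x f x.
Proof.
move=> mf; rewrite integralE [\int[p]_x _]integralE [\int[p']_x _]integralE.
rewrite /mixture ge0_integral_measure_add //; last exact: measurable_funepos.
rewrite ge0_integral_measure_add //; last exact: measurable_funeneg.
rewrite !ge0_integral_mscale //; try exact: measurable_funepos;
  try exact: measurable_funeneg.
by rewrite ge0_EFin_combB //; apply: integral_ge0.
Qed.

End mixture.

Lemma integral_gtNy d (X : measurableType d) (R : realType) (mu : measure X R)
    (f : X -> \bar R) :
  \int[mu]_x f^\- x < +oo -> -oo < \int[mu]_x f x.
Proof.
move=> fneg; rewrite integralE.
have fpos0 : 0 <= \int[mu]_x f^\+ x.
  by apply: integral_ge0 => x _; exact: funepos_ge0.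
have fneg0 : 0 <= \int[mu]_x f^\- x.
  by apply: integral_ge0 => x _; exact: funeneg_ge0.
move: fneg fneg0 fpos0; case: (\int[mu]_x f^\- x) => [b||] // _ _.
by case: (\int[mu]_x f^\+ x) => [a||] // _; rewrite -EFinB ltNyr.
Qed.

Lemma integral_dirac_at d (X : measurableType d) (R : realType) (x : X)
    (f : X -> \bar R) :
  measurable_fun setT f -> \int[\d_x]_y f y = f x.
Proof. by move=> mf; rewrite integral_dirac // diracT mul1e. Qed.

Section borel_measurability.
Variables (T : ptopologicalType) (R : realType).
Local Notation B := (g_sigma_algebraType (@open T)).

Lemma continuous_borel_measurable (f : T -> R) :
  continuous f -> measurable_fun [set: B] (f : B -> R).
Proof.
move=> /continuousP cf.
apply: (measurability _ (measurable_realfun.RGenOpens.measurableE R)).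
move=> _ [_ [a [b ->] <-]]; apply: measurableI => //.
by apply: sub_sigma_algebra; apply: cf; exact: interval_open.
Qed.

Lemma lower_semicontinuous_borel_measurable (f : T -> \bar R) :
  lower_semicontinuous f -> measurable_fun [set: B] (f : B -> \bar R).
Proof.
move=> /lower_semicontinuousP lsc_f.
apply: (measurability _ (measurable_realfun.ErealGenOInfty.measurableE R)).
move=> _ [_ [a ->] <-]; apply: measurableI => //.
by apply: sub_sigma_algebra; rewrite preimage_itvoy; exact: lsc_f.
Qed.

End borel_measurability.

Section dot_product.
Variables (R : realType) (d : nat).
Local Notation T := (Rd R d).
Implicit Types x y : 'rV[R]_d.

Lemma dotv_ge0 y : (0 <= dotv y y)%R.
Proof. by rewrite sumr_ge0 // => i _; rewrite -expr2 sqr_ge0. Qed.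

Lemma oppr_dotv_le x y : (- dotv x y <= dotv x x + dotv y y)%R.
Proof.
have : (0 <= dotv x x + dotv y y + 2 * dotv x y)%R.
  have -> : (dotv x x + dotv y y + 2 * dotv x y = dotv (x + y) (x + y))%R.
    rewrite /dotv mulr_sumr -!big_split /=.
    by apply: eq_bigr => i _; rewrite !mxE; ring.
  exact: dotv_ge0.
by have := dotv_ge0 x; have := dotv_ge0 y; lra.
Qed.

Lemma coord_measurable i :
  measurable_fun [set: T] (fun y : T => (y : 'rV[R]_d) ord0 i).
Proof. by apply: continuous_borel_measurable; exact: coord_continuous. Qed.

Lemma dotv_measurable :
  measurable_fun [set: T * T] (fun yz : T * T => dotv yz.1 yz.2).
Proof.
apply: measurable_sum => i; apply: measurable_funM.
- exact: measurableT_comp (coord_measurable i) measurable_fst.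
- exact: measurableT_comp (coord_measurable i) measurable_snd.
Qed.

Lemma dotv_diag_measurable : measurable_fun [set: T] (fun y : T => dotv y y).
Proof.
by apply: measurable_sum => i; apply: measurable_funM; exact: coord_measurable.
Qed.

End dot_product.

Section phi_psi_convexity.
Variables (R : realType) (d : nat) (q : probability (Rd R d) R).
Variable psi : 'rV[R]_d -> \bar R.
Local Notation T := (Rd R d).
Hypotheses (P2q : P2 q) (mpsi : measurable_fun [set: T] psi).

Definition objective (p : probability T R) := \int[p]_y psi y - MCov p q.

Definition pair_at (x : T) : T -> T * T := pair x.

Lemma measurable_pair_at (x : T) : measurable_fun setT (pair_at x).
Proof. exact/measurable_fun_pair/measurable_id/measurable_cst. Qed.

HB.instance Definition _ x :=
  isMeasurableFun.Build _ _ _ _ (pair_at x) (measurable_pair_at x).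

Lemma Cpl_dirac (x : T) : Cpl \d_x q (distribution q (pair_at x)).
Proof.
split=> [A mA|B mB].
- change (q (pair_at x @^-1` (A `*` setT)) = \d_x A); rewrite diracE.
  have [xA|xA] := boolP (x \in A).
    rewrite (_ : _ @^-1` _ = setT) ?probability_setT //.
    by apply/seteqP; split => // b _; split => //; rewrite -inE.
  rewrite (_ : _ @^-1` _ = set0) ?measure0 //.
  by apply/seteqP; split => // b [/= /mem_set]; rewrite (negbTE xA).
- change (q (pair_at x @^-1` (setT `*` B)) = q B).
  by congr (q _); apply/seteqP; split => b //= [].
Qed.

Lemma integral_dotv_cstD_lty (x : T) :
  \int[q]_b ((dotv x x)%:E + (dotv b b)%:E) < +oo.
Proof.
rewrite ge0_integralD //; first last.
- by apply/measurable_EFinP; exact: dotv_diag_measurable.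
- by move=> b _; rewrite lee_fin dotv_ge0.
- by move=> b _; rewrite lee_fin dotv_ge0.
rewrite (integral_cst q measurableT) lte_add_pinfty // lte_mul_pinfty //.
- by rewrite lee_fin dotv_ge0.
- exact: le_lt_trans (probability_le1 q measurableT) (ltry 1).
Qed.

Lemma MCov_dirac_gtNy (x : T) : -oo < MCov \d_x q.
Proof.
apply: (lt_le_trans _ (ereal_sup_ubound _)); last first.
  by exists (distribution q (pair_at x)); first exact: Cpl_dirac.
apply: integral_gtNy; rewrite ge0_integral_distribution; first last.
- by move=> yz; exact: funeneg_ge0.
- by apply: measurable_funeneg; apply/measurable_EFinP; exact: dotv_measurable.
apply: (@le_lt_trans _ _ (\int[q]_b ((dotv x x)%:E + (dotv b b)%:E))).
  apply: ge0_le_integral => //.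
  - by move=> b _; exact: funeneg_ge0.
  - apply: measurableT_comp (measurable_pair_at x).
    apply: measurable_funeneg.
    by apply/measurable_EFinP; exact: dotv_measurable.
  - apply: emeasurable_funD => //.
    by apply/measurable_EFinP; exact: dotv_diag_measurable.
  - move=> b _; rewrite /= funenegE ge_max -EFinD !lee_fin.
    by rewrite oppr_dotv_le addr_ge0 ?dotv_ge0.
exact: integral_dotv_cstD_lty.
Qed.

Lemma dirac_P2x (x : T) : P2x x \d_x.
Proof.
split=> [|i].
- rewrite /P2 integral_dirac_at ?ltry //.
  by apply/measurable_EFinP; exact: dotv_diag_measurable.
- rewrite integral_dirac_at //.
  by apply/measurable_EFinP; exact: coord_measurable.
Qed.

Lemma objective_dirac_lty (x : T) : psi x < +oo -> objective \d_x < +oo.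
Proof.
move=> psix; rewrite /objective integral_dirac_at //.
by rewrite lte_add_pinfty // lteNl; exact: MCov_dirac_gtNy.
Qed.

Section mixtures.
Variables (t s : {nonneg R}).
Hypotheses (ts1 : (t%:num + s%:num = 1)%R).
Hypotheses (t0 : (0 < t%:num)%R) (s0 : (0 < s%:num)%R).

Lemma mixture_P2x p p' (x y : T) : P2x x p -> P2x y p' ->
  P2x (t%:num *: x + s%:num *: y)%R (mixture p p' ts1).
Proof.
move=> [p2 bp] [p2' bp']; split=> [|i].
- rewrite /P2 integral_mixture; last first.
    by apply/measurable_EFinP; exact: dotv_diag_measurable.
  by rewrite lte_add_pinfty // lte_mul_pinfty.
- rewrite integral_mixture; last first.
    by apply/measurable_EFinP; exact: coord_measurable.
  by rewrite bp bp' -!EFinM -EFinD !mxE.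
Qed.

Lemma mixture_Cpl p p' pi pi' : Cpl p q pi -> Cpl p' q pi' ->
  Cpl (mixture p p' ts1) q (mixture pi pi' ts1).
Proof.
move=> [pi1 pi2] [pi1' pi2']; split=> [A mA|B mB]; rewrite !mixtureE.
- by rewrite pi1 // pi1'.
- by rewrite pi2 // pi2' // -ge0_muleDl ?lee_fin // -EFinD ts1 mul1e.
Qed.

Lemma MCov_mixture_ge p p' :
  t%:num%:E * MCov p q + s%:num%:E * MCov p' q <= MCov (mixture p p' ts1) q.
Proof.
apply: ereal_sup_comb_le => // _ _ [pi Cpi <-] [pi' Cpi' <-].
apply: ereal_sup_ubound; exists (mixture pi pi' ts1); first exact: mixture_Cpl.
by rewrite integral_mixture //; apply/measurable_EFinP; exact: dotv_measurable.
Qed.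

Lemma objective_mixture_le p p' : objective p < +oo -> objective p' < +oo ->
  objective (mixture p p' ts1) <=
  t%:num%:E * objective p + s%:num%:E * objective p'.
Proof.
move=> pfin p'fin; apply: le_trans (gt0_EFin_combB_le t0 s0 pfin p'fin).
by rewrite /objective integral_mixture // leeD2l // leeN2 MCov_mixture_ge.
Qed.

End mixtures.

Lemma phi_psi_econvex : econvex_on (edom psi) (phi_psi psi q).
Proof.
move=> x y t psix psiy /andP[t0 t1].
have s0 : (0 < 1 - t)%R by rewrite subr_gt0.
pose tn : {nonneg R} := NngNum (ltW t0).
pose sn : {nonneg R} := NngNum (ltW s0).
have ts1 : (tn%:num + sn%:num = 1)%R by rewrite addrC subrK.
have dirac_in_image (z : T) : psi z < +oo ->
    exists2 a, [set objective p | p in P2x z] a & a < +oo.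
  move=> psiz; exists (objective \d_z); last exact: objective_dirac_lty.
  by exists \d_z; first exact: dirac_P2x.
apply: ereal_inf_comb_ge => //; [exact: dirac_in_image psix |
  exact: dirac_in_image psiy |].
move=> _ _ [p Pp <-] [p' Pp' <-] pfin p'fin.
apply: le_trans (objective_mixture_le ts1 t0 s0 pfin p'fin).
by apply: ereal_inf_lbound; exists (mixture p p' ts1); first exact: mixture_P2x.
Qed.

End phi_psi_convexity.

Theorem lemma3p1 (R : realType) (d : nat) (q : probability (Rd R d) R)
    (psi : 'rV[R]_d -> \bar R) :
  P2 q -> no_mass_small_sets q ->
  (forall x, -oo < psi x) ->                (* psi : R^d -> (-oo, +oo] *)
  (exists x, psi x < +oo) ->                (* proper *)
  lower_semicontinuous psi ->
  econvex psi ->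
  (* (i) convexity of phi^psi on dom psi *)
  (forall (x y : 'rV[R]_d) (t : R), edom psi x -> edom psi y -> (0 < t < 1)%R ->
     phi_psi psi q (t *: x + (1 - t) *: y)%R
       <= t%:E * phi_psi psi q x + (1 - t)%R%:E * phi_psi psi q y) /\
  (* (ii) finiteness from below propagates over int (dom psi) *)
  ((exists x0, (edom psi)° x0 /\ -oo < phi_psi psi q x0) ->
     forall x, (edom psi)° x -> -oo < phi_psi psi q x).
Proof.
(* Lower semicontinuity only serves to make psi Borel. *)
move=> P2q _ _ _ /lower_semicontinuous_borel_measurable mpsi _.
have cvx := phi_psi_econvex P2q mpsi.
split=> [|[x0 [x0int x0fin]] x xint]; first exact: cvx.
exact: econvex_on_interior_gtNy cvx x0int x0fin (interior_subset xint).
Qed.
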